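(* For every well-filtered, coherent topological space $X$, the poset $\mathcal QX$ is a meet-continuous dcpo inf-semilattice which is well-filtered and coherent in its Scott topology. Hence $\mathcal Q\mathbb R_\ell$, $\mathcal Q^2\mathbb R_\ell$, $\ldots$ are all meet-continuous dcpo inf-semilattices which are well-filtered and coherent in their Scott topologies.
   Context: $\mathcal QX$ is the set of non-empty compact saturated subsets of $X$ ordered by reverse inclusion $\supseteq$; $\mathcal Q^{n+1}\mathbb R_\ell=\mathcal Q(\mathcal Q^n\mathbb R_\ell)$ where $\mathcal Q^n\mathbb R_\ell$ carries its Scott topology. The Sorgenfrey line $\mathbb R_\ell$ is $\mathbb R$ with the topology generated by $[a,b[$, $a<b$. A space is well-filtered if whenever a filtered family of compact saturated sets has intersection contained in an open $U$, some member of the family is contained in $U$. A space is coherent if the intersection of any two compact saturated subsets is compact. A dcpo inf-semilattice $P$ is meet-continuous if $x\wedge\sup D=\sup_{d\in D}(x\wedge d)$ for every $x\in P$ and directed $D\subseteq P$. *)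

From Stdlib Require Import Reals.


Record tspace := TSpace { pt :> Type; is_open : (pt -> Prop) -> Prop }.

Definition subset {T : Type} (A B : T -> Prop) : Prop := forall x, A x -> B x.

Definition topological (X : tspace) : Prop :=
  is_open X (fun _ => True) /\
  (forall U V, is_open X U -> is_open X V -> is_open X (fun x => U x /\ V x)) /\
  (forall F : (X -> Prop) -> Prop, (forall U, F U -> is_open X U) ->
      is_open X (fun x => exists U, F U /\ U x)).

Definition compact (X : tspace) (K : X -> Prop) : Prop :=
  forall F : (X -> Prop) -> Prop, (forall U, F U -> is_open X U) ->
    subset K (fun x => exists U, F U /\ U x) ->
    exists (n : nat) (G : nat -> X -> Prop),
      (forall i, (i < n)%nat -> F (G i)) /\
      subset K (fun x => exists i, (i < n)%nat /\ G i x).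

Definition saturated (X : tspace) (K : X -> Prop) : Prop :=
  forall x, (forall U, is_open X U -> subset K U -> U x) -> K x.

Definition compact_saturated (X : tspace) (K : X -> Prop) : Prop :=
  compact X K /\ saturated X K.

Definition filtered_family (X : tspace) (F : (X -> Prop) -> Prop) : Prop :=
  (exists K, F K) /\
  forall K1 K2, F K1 -> F K2 ->
    exists K3, F K3 /\ subset K3 K1 /\ subset K3 K2.

Definition well_filtered (X : tspace) : Prop :=
  forall (F : (X -> Prop) -> Prop) (U : X -> Prop),
    (forall K, F K -> compact_saturated X K) -> filtered_family X F ->
    is_open X U -> subset (fun x => forall K, F K -> K x) U ->
    exists K, F K /\ subset K U.

Definition coherent (X : tspace) : Prop :=
  forall K1 K2 : X -> Prop, compact_saturated X K1 -> compact_saturated X K2 ->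
    compact X (fun x => K1 x /\ K2 x).

Definition upper_bound {P : Type} (le : P -> P -> Prop) (D : P -> Prop) (u : P) :=
  forall d, D d -> le d u.
Definition lower_bound {P : Type} (le : P -> P -> Prop) (D : P -> Prop) (u : P) :=
  forall d, D d -> le u d.
Definition is_sup {P : Type} (le : P -> P -> Prop) (D : P -> Prop) (s : P) :=
  upper_bound le D s /\ forall u, upper_bound le D u -> le s u.
Definition is_inf {P : Type} (le : P -> P -> Prop) (D : P -> Prop) (m : P) :=
  lower_bound le D m /\ forall u, lower_bound le D u -> le u m.
Definition pair_set {P : Type} (x y : P) : P -> Prop := fun z => z = x \/ z = y.

Definition directed {P : Type} (le : P -> P -> Prop) (D : P -> Prop) : Prop :=
  (exists d, D d) /\
  forall a b, D a -> D b -> exists c, D c /\ le a c /\ le b c.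

Definition is_dcpo {P : Type} (le : P -> P -> Prop) : Prop :=
  forall D, directed le D -> exists s, is_sup le D s.

Definition inf_semilattice {P : Type} (le : P -> P -> Prop) : Prop :=
  forall x y, exists m, is_inf le (pair_set x y) m.

Definition meet_continuous {P : Type} (le : P -> P -> Prop) : Prop :=
  forall x (D : P -> Prop) s m,
    directed le D -> is_sup le D s -> is_inf le (pair_set x s) m ->
    is_sup le (fun y => exists d, D d /\ is_inf le (pair_set x d) y) m.

Definition scott_open {P : Type} (le : P -> P -> Prop) (U : P -> Prop) : Prop :=
  (forall x y, U x -> le x y -> U y) /\
  forall D s, directed le D -> is_sup le D s -> U s -> exists d, D d /\ U d.

(* QX: nonempty compact saturated subsets, ordered by reverse inclusion. *)
Record Qpt (X : tspace) := MkQ {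
  Qset : pt X -> Prop;
  Qne : exists x : pt X, Qset x;
  Qcs : compact_saturated X Qset }.

Definition Qle (X : tspace) (A B : Qpt X) : Prop := subset (Qset _ B) (Qset _ A).

Definition QS (X : tspace) : tspace := TSpace (Qpt X) (scott_open (@Qle X)).

Definition sorgenfrey : tspace :=
  TSpace R (fun U => forall x, U x -> exists a b, (a < b)%R /\ (a <= x < b)%R /\
                                   subset (fun y => (a <= y < b)%R) U).

(* QnR n = Q^n R_l with its Scott topology (n >= 1); QnR 0 = R_l. *)
Fixpoint QnR (n : nat) : tspace :=
  match n with O => sorgenfrey | S m => QS (QnR m) end.

Definition Q_good (X : tspace) : Prop :=
  is_dcpo (@Qle X) /\ inf_semilattice (@Qle X) /\ meet_continuous (@Qle X) /\
  well_filtered (QS X) /\ coherent (QS X).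

(* For a well-filtered X, the supremum of a directed family in QX is its intersection and
   binary infima are unions, so QX is a dcpo inf-semilattice whose meet continuity is the
   distributivity of union over filtered intersections.
   The Scott topology of QX is well-filtered by a topological Rudin lemma: if no member of a
   filtered family of Scott-compact saturated sets lies in the Scott open U0, Zorn gives a
   maximal Scott open W containing U0 and no member, and the intersection of the unions of
   the members' parts outside W is a common point outside W.
   Coherence of X makes {A | A ∩ B ∈ V} Scott open whenever V is, so a directed Scott-open
   cover of K1 ∩ K2 has, by compactness of K2 and then of K1, one member containing K1 ∩ K2.
   Compact subsets of the Sorgenfrey line are closed, which makes it well-filtered and
   coherent, and the first part iterates. *)

From Stdlib Require Import Reals Lra Lia List Classical FunctionalExtensionality PropExtensionality.
From mathcomp Require classical_sets.

Notation bigcup F := (fun x => exists U, F U /\ U x).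
Notation bigcap F := (fun x => forall K, F K -> K x).

Lemma pred_ext {T : Type} (A B : T -> Prop) : (forall x, A x <-> B x) -> A = B.
Proof.
  intro H; apply functional_extensionality; intro x; apply propositional_extensionality, H.
Qed.

Lemma zorn_subset_maximal (T : Type) (P : (T -> Prop) -> Prop) :
  (forall C : (T -> Prop) -> Prop, (forall A, C A -> P A) ->
     (forall A B, C A -> C B -> subset A B \/ subset B A) -> P (bigcup C)) ->
  exists A, P A /\ forall B, subset A B -> P B -> subset B A.
Proof.
  intros Hchain; destruct (@classical_sets.Zorn_bigcup T P) as [A [PA Hmax]].
  - intros C HC Htot.
    match goal with |- P ?S => replace S with (bigcup C); [apply Hchain; auto |] end.
    apply pred_ext; intro x; split; [intros [U [CU Ux]] | intros [U CU Ux]]; exists U; auto.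
  - exists A; split; [exact PA |].
    intros B HAB PB; apply NNPP; intro HBA; exact (Hmax B (conj HAB HBA) PB).
Qed.

Section Topology.
Context {X : tspace}.
Hypothesis HX : topological X.

Lemma open_bigcup (F : (X -> Prop) -> Prop) :
  (forall U, F U -> is_open X U) -> is_open X (bigcup F).
Proof. destruct HX as [_ [_ Hunion]]; apply Hunion. Qed.

Lemma open_empty : is_open X (fun _ => False).
Proof.
  replace (fun _ : X => False) with (bigcup (fun _ : X -> Prop => False)).
  - apply open_bigcup; tauto.
  - apply pred_ext; firstorder.
Qed.

Lemma open_setU (U V : X -> Prop) :
  is_open X U -> is_open X V -> is_open X (fun x => U x \/ V x).
Proof.
  intros HU HV; replace (fun x => U x \/ V x) with (bigcup (fun W => W = U \/ W = V)).
  - apply open_bigcup; intros W [-> | ->]; assumption.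
  - apply pred_ext; intro x; split.
    + intros [W [[-> | ->] Wx]]; auto.
    + intros [Ux | Vx]; eauto.
Qed.

Lemma compact_directed_cover (K : X -> Prop) (F : (X -> Prop) -> Prop) :
  compact X K -> (forall U, F U -> is_open X U) -> directed (@subset X) F ->
  subset K (bigcup F) -> exists U, F U /\ subset K U.
Proof.
  intros HK HF [[U0 HU0] Hdir] Hcov.
  destruct (HK F HF Hcov) as [n [G [HG HKG]]].
  assert (Hbound : forall m, m <= n -> exists U, F U /\ forall i, i < m -> subset (G i) U).
  { induction m as [|m IH]; intros Hm.
    - exists U0; split; [exact HU0 | intros; lia].
    - destruct IH as [U [HU HGU]]; [lia |].
      destruct (Hdir U (G m) HU (HG m ltac:(lia))) as [V [HV [HUV HGV]]].
      exists V; split; [exact HV |].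
      intros i Hi x Gx; destruct (Nat.eq_dec i m) as [-> | Hne]; [exact (HGV x Gx) |].
      apply HUV, (HGU i); [lia | exact Gx]. }
  destruct (Hbound n (le_n n)) as [U [HU HGU]].
  exists U; split; [exact HU |].
  intros x Kx; destruct (HKG x Kx) as [i [Hi Gx]]; exact (HGU i Hi x Gx).
Qed.

(* Finite unions of a cover form a directed cover. *)
Lemma compact_of_directed_covers (K : X -> Prop) :
  (forall F : (X -> Prop) -> Prop, (forall U, F U -> is_open X U) ->
     directed (@subset X) F -> subset K (bigcup F) -> exists U, F U /\ subset K U) ->
  compact X K.
Proof.
  intros Hdc F HF Hcov.
  set (FinU := fun V => exists l, (forall U, In U l -> F U) /\ V = bigcup (fun U => In U l)).
  destruct (Hdc FinU) as [V [[l [Hl ->]] HKV]].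
  - intros V [l [Hl ->]]; apply open_bigcup; auto.
  - split.
    + exists (bigcup (fun U => In U nil)), nil; split; [intros U [] | reflexivity].
    + intros V1 V2 [l1 [H1 ->]] [l2 [H2 ->]].
      exists (bigcup (fun U => In U (l1 ++ l2))); split.
      * exists (l1 ++ l2); split; [| reflexivity].
        intros U HU; apply in_app_or in HU; destruct HU; auto.
      * split; intros x [U [HU Ux]]; exists U; split; auto; apply in_or_app; auto.
  - intros x Kx; destruct (Hcov x Kx) as [U [HU Ux]].
    exists (bigcup (fun W => In W (U :: nil))); split.
    + exists (U :: nil); split; [intros W [<- | []]; exact HU | reflexivity].
    + exists U; split; [left; reflexivity | exact Ux].
  - exists (length l), (fun i => nth i l (fun _ => False)); split.
    + intros i Hi; apply Hl, nth_In, Hi.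
    + intros x Kx; destruct (HKV x Kx) as [U [HU Ux]].
      destruct (In_nth l U (fun _ => False) HU) as [i [Hi <-]].
      exists i; split; assumption.
Qed.

Lemma compact_diff_open (K O : X -> Prop) :
  compact X K -> is_open X O -> compact X (fun x => K x /\ ~ O x).
Proof.
  intros HK HO; apply compact_of_directed_covers.
  intros F HF [[U0 HU0] Hdir] Hcov.
  destruct (compact_directed_cover K (fun W => exists U, F U /\ W = fun x => U x \/ O x) HK)
    as [W [[U [HU ->]] HKW]].
  - intros W [U [HU ->]]; apply open_setU; auto.
  - split; [exists (fun x => U0 x \/ O x), U0; auto |].
    intros W1 W2 [U1 [H1 ->]] [U2 [H2 ->]].
    destruct (Hdir U1 U2 H1 H2) as [U3 [H3 [S1 S2]]].
    exists (fun x => U3 x \/ O x); split; [exists U3; auto |].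
    split; intros x [Ux | Ox]; auto.
  - intros x Kx; destruct (classic (O x)) as [Ox | nOx].
    + exists (fun x => U0 x \/ O x); split; [exists U0; auto | right; exact Ox].
    + destruct (Hcov x (conj Kx nOx)) as [U [HU Ux]].
      exists (fun x => U x \/ O x); split; [exists U; auto | left; exact Ux].
  - exists U; split; [exact HU |].
    intros x [Kx nOx]; destruct (HKW x Kx); tauto.
Qed.

Lemma compact_setU (A B : X -> Prop) :
  compact X A -> compact X B -> compact X (fun x => A x \/ B x).
Proof.
  intros HA HB; apply compact_of_directed_covers; intros F HF HFdir Hcov.
  destruct (compact_directed_cover A F HA HF HFdir) as [U1 [H1 S1]];
    [intros x Ax; apply Hcov; auto |].
  destruct (compact_directed_cover B F HB HF HFdir) as [U2 [H2 S2]];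
    [intros x Bx; apply Hcov; auto |].
  destruct (proj2 HFdir U1 U2 H1 H2) as [U [HU [T1 T2]]].
  exists U; split; [exact HU |]; intros x [Ax | Bx]; auto.
Qed.

Lemma saturated_bigcup (S : (X -> Prop) -> Prop) :
  (forall K, S K -> saturated X K) -> saturated X (bigcup S).
Proof.
  intros HS x Hx; apply NNPP; intro Hnx.
  set (O := bigcup (fun U => is_open X U /\ ~ U x /\ exists K, S K /\ subset K U)).
  assert (HO : is_open X O) by (apply open_bigcup; intros U [HU _]; exact HU).
  assert (Hcov : subset (bigcup S) O).
  { intros y [K [SK Ky]].
    assert (Hsep : exists U, is_open X U /\ subset K U /\ ~ U x).
    { apply NNPP; intro Hno; apply Hnx; exists K; split; [exact SK |].
      apply (HS K SK); intros U HU HKU; apply NNPP; intro nUx; apply Hno; eauto. }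
    destruct Hsep as [U [HU [HKU nUx]]].
    exists U; split; [split; [exact HU | split; [exact nUx | eauto]] | exact (HKU y Ky)]. }
  destruct (Hx O HO Hcov) as [U [[_ [nUx _]] Ux]]; contradiction.
Qed.

Lemma saturated_bigcap (S : (X -> Prop) -> Prop) :
  (forall K, S K -> saturated X K) -> saturated X (bigcap S).
Proof.
  intros HS x Hx K SK; apply (HS K SK); intros U HU HKU; apply Hx; [exact HU |].
  intros y Hy; exact (HKU y (Hy K SK)).
Qed.

Section WellFiltered.
Hypothesis HWF : well_filtered X.
Variable F : (X -> Prop) -> Prop.
Hypothesis HFcs : forall K, F K -> compact_saturated X K.
Hypothesis HFfil : filtered_family X F.

Lemma well_filtered_bigcap_nonempty : (forall K, F K -> exists x, K x) -> exists x, bigcap F x.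
Proof.
  intros Hne; apply NNPP; intro Hempty.
  destruct (HWF F (fun _ => False) HFcs HFfil open_empty) as [K [FK HK]].
  - intros x Hx; apply Hempty; exists x; exact Hx.
  - destruct (Hne K FK) as [x Kx]; exact (HK x Kx).
Qed.

Lemma well_filtered_bigcap_compact : compact X (bigcap F).
Proof.
  intros G HG Hcov.
  destruct (HWF F (bigcup G) HFcs HFfil (open_bigcup G HG) Hcov) as [K [FK HK]].
  destruct (proj1 (HFcs K FK) G HG HK) as [n [H [HH HKH]]].
  exists n, H; split; [exact HH |]; intros x Hx; exact (HKH x (Hx K FK)).
Qed.

End WellFiltered.

Section CompactsClosed.
Hypothesis Hclosed : forall K, compact X K -> is_open X (fun x => ~ K x).

Lemma well_filtered_of_compacts_closed : well_filtered X.
Proof.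
  intros F U HF [[K0 FK0] Hfil] HU Hsub.
  destruct (compact_directed_cover K0 (fun W => exists K, F K /\ W = fun x => U x \/ ~ K x)
              (proj1 (HF K0 FK0))) as [W [[K [FK ->]] HK0W]].
  - intros W [K [FK ->]]; apply open_setU; [exact HU | apply Hclosed, HF, FK].
  - split; [exists (fun x => U x \/ ~ K0 x), K0; auto |].
    intros W1 W2 [K1 [F1 ->]] [K2 [F2 ->]].
    destruct (Hfil K1 K2 F1 F2) as [K3 [F3 [S1 S2]]].
    exists (fun x => U x \/ ~ K3 x); split; [exists K3; auto |].
    split; intros x [Ux | nKx]; auto.
  - intros x _; destruct (classic (U x)) as [Ux | nUx].
    + exists (fun x => U x \/ ~ K0 x); split; [exists K0; auto | left; exact Ux].
    + assert (exists K, F K /\ ~ K x) as [K [FK nKx]].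
      { apply NNPP; intro Hno; apply nUx, Hsub; intros K FK.
        apply NNPP; intro nKx; apply Hno; eauto. }
      exists (fun x => U x \/ ~ K x); split; [exists K; auto | right; exact nKx].
  - destruct (Hfil K0 K FK0 FK) as [K3 [F3 [S1 S2]]].
    exists K3; split; [exact F3 |]; intros x K3x.
    destruct (HK0W x (S1 x K3x)) as [Ux | nKx]; [exact Ux | contradiction (nKx (S2 x K3x))].
Qed.

Lemma coherent_of_compacts_closed : coherent X.
Proof.
  intros K1 K2 [HK1 _] [HK2 _].
  replace (fun x => K1 x /\ K2 x) with (fun x => K1 x /\ ~ ~ K2 x).
  - apply compact_diff_open; auto.
  - apply pred_ext; intro x; split; intros [H1 H2]; split; auto; apply NNPP; exact H2.
Qed.

End CompactsClosed.
End Topology.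

Lemma sorgenfrey_topological : topological sorgenfrey.
Proof.
  split; [| split].
  - intros x _; exists x, (x + 1)%R; split; [lra | split; [lra | intros y _; exact I]].
  - intros U V HU HV x [Ux Vx].
    destruct (HU x Ux) as [a [b [Hab [Hx SU]]]].
    destruct (HV x Vx) as [c [d [Hcd [Hx' SV]]]].
    exists (Rmax a c), (Rmin b d).
    pose proof (Rmax_l a c); pose proof (Rmax_r a c).
    pose proof (Rmin_l b d); pose proof (Rmin_r b d).
    assert (Rmax a c <= x < Rmin b d)%R
      by (split; [apply Rmax_lub | apply Rmin_glb_lt]; lra).
    split; [lra | split; [lra |]].
    intros y Hy; split; [apply SU | apply SV]; lra.
  - intros F HF x [U [FU Ux]].
    destruct (HF U FU x Ux) as [a [b [Hab [Hx SU]]]].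
    exists a, b; split; [exact Hab | split; [exact Hx |]].
    intros y Hy; exists U; split; [exact FU | exact (SU y Hy)].
Qed.

(* Some [x, x + 1/(n+1)[ misses a compact K not containing x, because the open sets
   ]-oo, x[ U [x + 1/(n+1), +oo[ increase and cover K. *)
Lemma sorgenfrey_compacts_closed (K : sorgenfrey -> Prop) :
  compact sorgenfrey K -> is_open sorgenfrey (fun x => ~ K x).
Proof.
  intros HK x nKx.
  set (eps := fun n : nat => (/ (INR n + 1))%R).
  assert (Heps_pos : forall n, (0 < eps n)%R)
    by (intro n; apply Rinv_0_lt_compat; pose proof (pos_INR n); lra).
  assert (Heps_anti : forall m n, (m <= n)%nat -> (eps n <= eps m)%R).
  { intros m n Hmn; apply Rinv_le_contravar;
      [pose proof (pos_INR m); lra | apply le_INR in Hmn; lra]. }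
  set (U := fun n (y : R) => (y < x \/ x + eps n <= y)%R).
  destruct (compact_directed_cover K (fun V => exists n, V = U n) HK) as [V [[n ->] HKU]].
  - intros V [n ->] y [Hy | Hy].
    + exists y, x; split; [exact Hy | split; [lra | intros z Hz; left; lra]].
    + exists y, (y + 1)%R; split; [lra | split; [lra | intros z Hz; right; lra]].
  - split; [exists (U 0%nat), 0%nat; reflexivity |].
    intros V1 V2 [n1 ->] [n2 ->]; exists (U (max n1 n2)); split; [exists (max n1 n2); reflexivity |].
    pose proof (Heps_anti n1 _ (Nat.le_max_l n1 n2)); pose proof (Heps_anti n2 _ (Nat.le_max_r n1 n2)).
    split; intros y [Hy | Hy]; [left | right | left | right]; lra.
  - intros y Ky; destruct (Rlt_or_le y x) as [Hyx | Hxy].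
    + exists (U 0%nat); split; [exists 0%nat; reflexivity | left; exact Hyx].
    + assert (Hyx : y <> x) by (intros ->; contradiction).
      destruct (archimed_cor1 (y - x) ltac:(lra)) as [N [HN HN0]].
      assert (/ (INR N + 1) <= / INR N)%R
        by (apply Rinv_le_contravar; [apply lt_0_INR; lia | lra]).
      exists (U N); split; [exists N; reflexivity | right; unfold eps; lra].
  - exists x, (x + eps n)%R; pose proof (Heps_pos n).
    split; [lra | split; [lra |]].
    intros y Hy Ky; destruct (HKU y Ky); lra.
Qed.

Section MaximalOpen.
Context {Y : tspace}.
Hypothesis HY : topological Y.
Variable FF : (Y -> Prop) -> Prop.
Hypothesis HFF : forall K, FF K -> compact Y K.
Variable O : Y -> Prop.
Hypothesis HO : is_open Y O.
Hypothesis HFFO : forall K, FF K -> ~ subset K O.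

Let avoids_with_O (W0 : Y -> Prop) : Prop :=
  is_open Y (fun y => O y \/ W0 y) /\ forall K, FF K -> ~ subset K (fun y => O y \/ W0 y).

Lemma chain_union_avoids_with_O (C : (Y -> Prop) -> Prop) :
  (forall W0, C W0 -> avoids_with_O W0) ->
  (forall W1 W2, C W1 -> C W2 -> subset W1 W2 \/ subset W2 W1) ->
  avoids_with_O (bigcup C).
Proof.
  intros HC Htot.
  set (G := fun V => V = O \/ exists W0, C W0 /\ V = fun y => O y \/ W0 y).
  assert (HGopen : forall V, G V -> is_open Y V)
    by (intros V [-> | [W0 [CW0 ->]]]; [exact HO | exact (proj1 (HC W0 CW0))]).
  assert (HOG : forall V, G V -> subset O V)
    by (intros V [-> | [W0 [_ ->]]] y Oy; [exact Oy | left; exact Oy]).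
  assert (HGdir : directed (@subset Y) G).
  { split; [exists O; left; reflexivity |].
    intros V1 V2 [-> | [W1 [C1 ->]]] G2.
    { exists V2; split; [exact G2 | split; [exact (HOG V2 G2) | intros y h; exact h]]. }
    destruct G2 as [-> | [W2 [C2 ->]]].
    { exists (fun y => O y \/ W1 y); split; [right; eauto |].
      split; [intros y h; exact h | intros y Oy; left; exact Oy]. }
    destruct (Htot W1 W2 C1 C2) as [S12 | S21];
      [exists (fun y => O y \/ W2 y) | exists (fun y => O y \/ W1 y)];
      (split; [right; eauto | split; intros y [Oy | Wy]; auto]). }
  assert (HGU : (fun y => O y \/ bigcup C y) = bigcup G).
  { apply pred_ext; intro y; split.
    - intros [Oy | [W1 [C1 Wy]]]; [exists O; split; [left |]; auto |].
      exists (fun y => O y \/ W1 y); split; [right; eauto | right; exact Wy].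
    - intros [V [[-> | [W1 [C1 ->]]] Vy]]; [left; exact Vy |].
      destruct Vy as [Oy | Wy]; [left | right; exists W1]; auto. }
  unfold avoids_with_O; rewrite HGU; split; [apply open_bigcup; assumption |].
  intros K FK HK.
  destruct (compact_directed_cover K G (HFF K FK) HGopen HGdir HK)
    as [V [[-> | [W1 [C1 ->]]] HKV]];
    [exact (HFFO K FK HKV) | exact (proj2 (HC W1 C1) K FK HKV)].
Qed.

Lemma maximal_open_not_covering :
  exists W, is_open Y W /\ subset O W /\ (forall K, FF K -> ~ subset K W) /\
    forall V, is_open Y V -> (forall K, FF K -> ~ subset K (fun y => W y \/ V y)) -> subset V W.
Proof.
  destruct (zorn_subset_maximal Y avoids_with_O chain_union_avoids_with_O)
    as [W0 [[HW0 HFFW0] Hmax]].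
  exists (fun y => O y \/ W0 y); split; [exact HW0 |].
  split; [intros y Oy; left; exact Oy | split; [exact HFFW0 |]].
  intros V HV HFFV y Vy.
  assert (HW0V : avoids_with_O (fun y => W0 y \/ V y)).
  { split.
    - replace (fun y => O y \/ W0 y \/ V y) with (fun y => (O y \/ W0 y) \/ V y)
        by (apply pred_ext; tauto).
      apply open_setU; assumption.
    - intros K FK HK; apply (HFFV K FK); intros z Kz; destruct (HK z Kz); tauto. }
  right; exact (Hmax _ (fun z h => or_introl h) HW0V y (or_intror Vy)).
Qed.

End MaximalOpen.

#[local] Arguments Qset {X} _ _.
#[local] Arguments Qne {X} _.
#[local] Arguments Qcs {X} _.
#[local] Arguments MkQ {X} _ _ _.
#[local] Arguments Qle {X} _ _.

Notation Qcap D := (fun x => forall d, D d -> Qset d x).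
Notation Qcup S := (fun x => exists A, S A /\ Qset A x).

Lemma scott_topological (X : tspace) : topological (QS X).
Proof.
  split; [| split].
  - split; [intros; exact I |]; intros D s [[d Dd] _] _ _; exists d; split; [exact Dd | exact I].
  - intros U V [Uup Uacc] [Vup Vacc]; split.
    + intros A B [UA VA] HAB; split; [exact (Uup A B UA HAB) | exact (Vup A B VA HAB)].
    + intros D s HD Hs [Us Vs].
      destruct (Uacc D s HD Hs Us) as [d1 [D1 U1]].
      destruct (Vacc D s HD Hs Vs) as [d2 [D2 V2]].
      destruct (proj2 HD d1 d2 D1 D2) as [d3 [D3 [L1 L2]]].
      exists d3; split; [exact D3 | split; [exact (Uup d1 d3 U1 L1) | exact (Vup d2 d3 V2 L2)]].
  - intros F HF; split.
    + intros A B [U [FU UA]] HAB; exists U; split; [exact FU | exact (proj1 (HF U FU) A B UA HAB)].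
    + intros D s HD Hs [U [FU Us]].
      destruct (proj2 (HF U FU) D s HD Hs Us) as [d [Dd Ud]].
      exists d; split; [exact Dd | exists U; split; assumption].
Qed.

Lemma saturated_QS_upper (X : tspace) (K : Qpt X -> Prop) (A B : Qpt X) :
  saturated (QS X) K -> K A -> Qle A B -> K B.
Proof. intros HK KA HAB; apply HK; intros U [Uup _] HKU; exact (Uup A B (HKU A KA) HAB). Qed.

Section QX.
Context {X : tspace}.
Hypothesis HX : topological X.

Lemma Q_exists (K : X -> Prop) :
  (exists x, K x) -> compact X K -> saturated X K -> exists C : Qpt X, Qset C = K.
Proof. intros Hne HK HS; exists (MkQ K Hne (conj HK HS)); reflexivity. Qed.

Lemma Q_setU_exists (A B : Qpt X) :
  exists C : Qpt X, Qset C = (fun x => Qset A x \/ Qset B x).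
Proof.
  apply Q_exists.
  - destruct (Qne A) as [x Ax]; exists x; left; exact Ax.
  - apply compact_setU; [exact HX | apply (Qcs A) | apply (Qcs B)].
  - replace (fun x => Qset A x \/ Qset B x) with (bigcup (fun K => K = Qset A \/ K = Qset B)).
    + apply saturated_bigcup; [exact HX |]; intros K [-> | ->]; apply Qcs.
    + apply pred_ext; intro x; split; [intros [K [[-> | ->] Kx]] | intros [Ax | Bx]]; eauto.
Qed.

Lemma is_inf_Q_setU (A B C : Qpt X) :
  Qset C = (fun x => Qset A x \/ Qset B x) -> is_inf Qle (pair_set A B) C.
Proof.
  intros HC; split.
  - intros d [-> | ->] x Hx; rewrite HC; auto.
  - intros m Hm x; rewrite HC; intros [Ax | Bx];
      [apply (Hm A) | apply (Hm B)]; unfold pair_set; auto.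
Qed.

Lemma Q_inf_setU (A B m : Qpt X) :
  is_inf Qle (pair_set A B) m -> Qset m = (fun x => Qset A x \/ Qset B x).
Proof.
  intros [Hlow Hgreat]; destruct (Q_setU_exists A B) as [C HC].
  apply pred_ext; intro x; split.
  - intro mx; pose proof (Hgreat C (proj1 (is_inf_Q_setU A B C HC)) x mx) as Cx.
    rewrite HC in Cx; exact Cx.
  - intros [Ax | Bx]; [apply (Hlow A) | apply (Hlow B)]; unfold pair_set; auto.
Qed.

Lemma Qset_image_compact_saturated (D : Qpt X -> Prop) (K : X -> Prop) :
  (exists d, D d /\ K = Qset d) -> compact_saturated X K.
Proof. intros [d [_ ->]]; apply Qcs. Qed.

Lemma Q_directed_filtered (D : Qpt X -> Prop) :
  directed Qle D -> filtered_family X (fun K => exists d, D d /\ K = Qset d).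
Proof.
  intros [[d0 D0] Hdir]; split; [exists (Qset d0), d0; auto |].
  intros K1 K2 [d1 [D1 ->]] [d2 [D2 ->]].
  destruct (Hdir d1 d2 D1 D2) as [d3 [D3 [L1 L2]]].
  exists (Qset d3); split; [exists d3; auto | split; assumption].
Qed.

Lemma is_sup_Qcap (D : Qpt X -> Prop) (M : Qpt X) : Qset M = Qcap D -> is_sup Qle D M.
Proof.
  intros HM; split.
  - intros d Dd x; rewrite HM; intro Hx; exact (Hx d Dd).
  - intros u Hu x ux; rewrite HM; intros d Dd; exact (Hu d Dd x ux).
Qed.

Hypothesis HWF : well_filtered X.

Lemma Q_sup_exists (D : Qpt X -> Prop) : directed Qle D -> exists M : Qpt X, Qset M = Qcap D.
Proof.
  intros HD; pose proof (Q_directed_filtered D HD) as Hfil.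
  pose proof (Qset_image_compact_saturated D) as Hcs.
  assert (Hcap : bigcap (fun K => exists d, D d /\ K = Qset d) = Qcap D).
  { apply pred_ext; intro x; split.
    - intros Hx d Dd; apply Hx; exists d; auto.
    - intros Hx K [d [Dd ->]]; exact (Hx d Dd). }
  rewrite <- Hcap; apply Q_exists.
  - apply (well_filtered_bigcap_nonempty HX HWF _ Hcs Hfil).
    intros K [d [_ ->]]; apply Qne.
  - apply (well_filtered_bigcap_compact HX HWF _ Hcs Hfil).
  - apply saturated_bigcap; exact (fun K HK => proj2 (Hcs K HK)).
Qed.

Lemma Q_sup_Qcap (D : Qpt X -> Prop) (s : Qpt X) :
  directed Qle D -> is_sup Qle D s -> Qset s = Qcap D.
Proof.
  intros HD [Hup Hleast]; destruct (Q_sup_exists D HD) as [M HM].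
  apply pred_ext; intro x; split.
  - intros sx d Dd; exact (Hup d Dd x sx).
  - intros Hx; apply (Hleast M (proj1 (is_sup_Qcap D M HM)) x); rewrite HM; exact Hx.
Qed.

Lemma Q_dcpo : is_dcpo (@Qle X).
Proof.
  intros D HD; destruct (Q_sup_exists D HD) as [M HM]; exists M; exact (is_sup_Qcap D M HM).
Qed.

Lemma Q_inf_semilattice : inf_semilattice (@Qle X).
Proof.
  intros A B; destruct (Q_setU_exists A B) as [C HC]; exists C; exact (is_inf_Q_setU A B C HC).
Qed.

Lemma Q_meet_continuous : meet_continuous (@Qle X).
Proof.
  intros A D s m HD Hs Hm.
  pose proof (Q_sup_Qcap D s HD Hs) as Hsc; pose proof (Q_inf_setU A s m Hm) as Hmc.
  split.
  - intros y [d [Dd Hy]] x; rewrite (Q_inf_setU A d y Hy), Hmc, Hsc.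
    intros [Ax | Hx]; [left; exact Ax | right; exact (Hx d Dd)].
  - intros u Hu x ux; rewrite Hmc, Hsc.
    destruct (classic (Qset A x)) as [Ax | nAx]; [left; exact Ax | right].
    intros d Dd; destruct (Q_setU_exists A d) as [y Hy].
    assert (yx : Qset y x) by (exact (Hu y (ex_intro _ d (conj Dd (is_inf_Q_setU A d y Hy))) x ux)).
    rewrite Hy in yx; destruct yx; [contradiction | assumption].
Qed.

Lemma box_scott_open (U : X -> Prop) :
  is_open X U -> scott_open Qle (fun A : Qpt X => subset (Qset A) U).
Proof.
  intros HU; split.
  - intros A B HA HAB x Bx; exact (HA x (HAB x Bx)).
  - intros D s HD Hs HsU.
    destruct (HWF _ U (Qset_image_compact_saturated D) (Q_directed_filtered D HD) HU)
      as [K [[d [Dd ->]] HdU]].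
    + intros x Hx; apply HsU; rewrite (Q_sup_Qcap D s HD Hs); intros d Dd; apply Hx; eauto.
    + exists d; split; assumption.
Qed.

Lemma Q_bigcup_exists (S : Qpt X -> Prop) :
  compact (QS X) S -> (exists A, S A) -> exists E : Qpt X, Qset E = Qcup S.
Proof.
  intros HS [A0 SA0]; apply Q_exists.
  - destruct (Qne A0) as [x Hx]; exists x, A0; split; assumption.
  - apply (compact_of_directed_covers HX); intros F HF [[U0 FU0] Hdir] Hcov.
    destruct (@compact_directed_cover (QS X) S (fun V => exists U, F U /\ V = fun A => subset (Qset A) U) HS)
      as [V [[U [FU ->]] HSU]].
    + intros V [U [FU ->]]; exact (box_scott_open U (HF U FU)).
    + split; [exists (fun A => subset (Qset A) U0), U0; auto |].
      intros V1 V2 [U1 [F1 ->]] [U2 [F2 ->]].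
      destruct (Hdir U1 U2 F1 F2) as [U3 [F3 [S1 S2]]].
      exists (fun A => subset (Qset A) U3); split; [exists U3; auto |].
      split; intros A HA x Ax; [exact (S1 x (HA x Ax)) | exact (S2 x (HA x Ax))].
    + intros A SA.
      destruct (compact_directed_cover (Qset A) F (proj1 (Qcs A)) HF (conj (ex_intro _ U0 FU0) Hdir))
        as [U [FU HAU]]; [intros x Ax; apply Hcov; eauto |].
      exists (fun A => subset (Qset A) U); split; [exists U; auto | exact HAU].
    + exists U; split; [exact FU |]; intros x [A [SA Ax]]; exact (HSU A SA x Ax).
  - replace (Qcup S) with (bigcup (fun K => exists A, S A /\ K = Qset A)).
    + apply saturated_bigcup; [exact HX |]; intros K [A [_ ->]]; apply Qcs.
    + apply pred_ext; intro x; split.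
      * intros [K [[A [SA ->]] Ax]]; eauto.
      * intros [A [SA Ax]]; exists (Qset A); eauto.
Qed.

End QX.

Section QS_well_filtered.
Context {X : tspace}.
Hypothesis HX : topological X.
Hypothesis HWF : well_filtered X.
Variable FF : (Qpt X -> Prop) -> Prop.
Hypothesis HFF : forall K, FF K -> compact_saturated (QS X) K.
Hypothesis HFFfil : filtered_family (QS X) FF.
Variable W : Qpt X -> Prop.
Hypothesis HW : scott_open Qle W.
Hypothesis HFFW : forall K, FF K -> ~ subset K W.
Hypothesis HWmax : forall V, scott_open Qle V ->
  (forall K, FF K -> ~ subset K (fun A => W A \/ V A)) -> subset V W.

Lemma outside_nonempty (K : Qpt X -> Prop) : FF K -> exists A, K A /\ ~ W A.
Proof.
  intros FK; apply NNPP; intro Hno; apply (HFFW K FK); intros A KA.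
  apply NNPP; intro nWA; apply Hno; exists A; split; assumption.
Qed.

Lemma Q_outside_bigcup_exists (K : Qpt X -> Prop) :
  FF K -> exists E : Qpt X, Qset E = Qcup (fun A => K A /\ ~ W A).
Proof.
  intros FK; apply (Q_bigcup_exists HX HWF); [| exact (outside_nonempty K FK)].
  exact (@compact_diff_open (QS X) (scott_topological X) K W (proj1 (HFF K FK)) HW).
Qed.

Let EE (E : Qpt X) : Prop := exists K, FF K /\ Qset E = Qcup (fun A => K A /\ ~ W A).

Lemma outside_bigcups_directed : directed Qle EE.
Proof.
  destruct HFFfil as [[K0 FK0] Hfil]; split.
  - destruct (Q_outside_bigcup_exists K0 FK0) as [E HE]; exists E, K0; split; assumption.
  - intros E1 E2 [K1 [F1 H1]] [K2 [F2 H2]].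
    destruct (Hfil K1 K2 F1 F2) as [K3 [F3 [S1 S2]]].
    destruct (Q_outside_bigcup_exists K3 F3) as [E3 H3].
    exists E3; split; [exists K3; split; assumption |].
    split; intros x; rewrite H3; intros [A [[K3A nWA] Ax]].
    + rewrite H1; exists A; split; [split; [exact (S1 A K3A) | exact nWA] | exact Ax].
    + rewrite H2; exists A; split; [split; [exact (S2 A K3A) | exact nWA] | exact Ax].
Qed.

(* Maximality of W forces the intersection M of the sets [Qcup (K \ W)] into every A
   outside W, so M lies above a member of each K. *)
Lemma filtered_compacts_common_point_outside :
  exists M, (forall K, FF K -> K M) /\ ~ W M.
Proof.
  destruct (Q_sup_exists HX HWF EE outside_bigcups_directed) as [M HM].
  assert (HMsup := is_sup_Qcap EE M HM).
  assert (nWM : ~ W M).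
  { intro WM; destruct (proj2 HW EE M outside_bigcups_directed HMsup WM) as [E [[K [FK HE]] WE]].
    destruct (outside_nonempty K FK) as [A [KA nWA]]; apply nWA.
    apply (proj1 HW E A WE); intros x Ax; rewrite HE; exists A; auto. }
  assert (HMbelow : forall A, ~ W A -> Qle A M).
  { intros A nWA x Mx; apply (proj2 (Qcs A)); intros U HU HAU.
    assert (Hcov : exists K, FF K /\ subset K (fun B => W B \/ subset (Qset B) U)).
    { apply NNPP; intro Hno; apply nWA, (HWmax _ (box_scott_open HX HWF U HU)); [| exact HAU].
      intros K FK HK; apply Hno; exists K; split; assumption. }
    destruct Hcov as [K [FK HK]]; destruct (Q_outside_bigcup_exists K FK) as [E HE].
    assert (Ex : Qset E x) by (rewrite HM in Mx; apply Mx; exists K; split; assumption).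
    rewrite HE in Ex; destruct Ex as [B [[KB nWB] Bx]].
    destruct (HK B KB) as [WB | HBU]; [contradiction | exact (HBU x Bx)]. }
  exists M; split; [| exact nWM].
  intros K FK; destruct (outside_nonempty K FK) as [A [KA nWA]].
  exact (saturated_QS_upper X K A M (proj2 (HFF K FK)) KA (HMbelow A nWA)).
Qed.

End QS_well_filtered.

Lemma QS_well_filtered (X : tspace) :
  topological X -> well_filtered X -> well_filtered (QS X).
Proof.
  intros HX HWF FF U0 HFF Hfil HU0 Hsub; apply NNPP; intro Hno.
  assert (HFFU0 : forall K, FF K -> ~ subset K U0)
    by (intros K FK HK; apply Hno; exists K; split; assumption).
  destruct (@maximal_open_not_covering (QS X) (scott_topological X) FF
              (fun K FK => proj1 (HFF K FK)) U0 HU0 HFFU0) as [W [HW [HU0W [HFFW HWmax]]]].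
  destruct (filtered_compacts_common_point_outside HX HWF FF HFF Hfil W HW HFFW HWmax)
    as [M [HM nWM]].
  exact (nWM (HU0W M (Hsub M HM))).
Qed.

Section QS_coherent.
Context {X : tspace}.
Hypothesis HX : topological X.
Hypothesis HWF : well_filtered X.
Hypothesis Hcoh : coherent X.

Lemma Q_setI_exists (A B : Qpt X) : (exists x, Qset A x /\ Qset B x) ->
  exists C : Qpt X, Qset C = (fun x => Qset A x /\ Qset B x).
Proof.
  intros Hne; apply Q_exists; [exact Hne | apply Hcoh; apply Qcs |].
  replace (fun x => Qset A x /\ Qset B x) with (bigcap (fun K => K = Qset A \/ K = Qset B)).
  - apply saturated_bigcap; intros K [-> | ->]; apply Qcs.
  - apply pred_ext; intro x; split.
    + intro Hx; split; apply Hx; auto.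
    + intros [Ax Bx] K [-> | ->]; assumption.
Qed.

(* [A ∩ B ∈ V], where an empty intersection counts as lying in every [V]. *)
Definition meet_in (V : Qpt X -> Prop) (A B : Qpt X) : Prop :=
  forall C : Qpt X, Qset C = (fun x => Qset A x /\ Qset B x) -> V C.

Lemma meet_in_sym (V : Qpt X -> Prop) (A B : Qpt X) : meet_in V A B -> meet_in V B A.
Proof. intros H C HC; apply H; rewrite HC; apply pred_ext; intro; tauto. Qed.

Lemma meet_in_antitone (V : Qpt X -> Prop) (A B A' B' : Qpt X) : scott_open Qle V ->
  subset (fun x => Qset A' x /\ Qset B' x) (fun x => Qset A x /\ Qset B x) ->
  meet_in V A B -> meet_in V A' B'.
Proof.
  intros [Vup _] Hsub H C' HC'.
  destruct (Qne C') as [y C'y]; rewrite HC' in C'y.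
  destruct (Q_setI_exists A B (ex_intro _ y (Hsub y C'y))) as [C HC].
  apply (Vup C C' (H C HC)); intros x; rewrite HC', HC; exact (Hsub x).
Qed.

Lemma meet_in_directed_sup (D : Qpt X -> Prop) (s B : Qpt X) (V : Qpt X -> Prop) :
  directed Qle D -> is_sup Qle D s -> scott_open Qle V ->
  meet_in V s B -> exists d, D d /\ meet_in V d B.
Proof.
  intros HD Hs HV HsB.
  destruct (classic (exists d, D d /\ ~ exists x, Qset d x /\ Qset B x))
    as [[d [Dd Hdisj]] | Hmeet].
  { exists d; split; [exact Dd |]; intros C HC.
    destruct (Qne C) as [x Cx]; rewrite HC in Cx; contradiction (Hdisj (ex_intro _ x Cx)). }
  assert (Hmeets : forall d, D d -> exists x, Qset d x /\ Qset B x)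
    by (intros d Dd; apply NNPP; intro Hdisj; apply Hmeet; exists d; split; assumption).
  set (E := fun C => exists d, D d /\ Qset C = fun x => Qset d x /\ Qset B x).
  assert (HE : directed Qle E).
  { destruct HD as [[d0 D0] Hdir]; split.
    - destruct (Q_setI_exists d0 B (Hmeets d0 D0)) as [C HC]; exists C, d0; split; assumption.
    - intros C1 C2 [d1 [D1 H1]] [d2 [D2 H2]].
      destruct (Hdir d1 d2 D1 D2) as [d3 [D3 [L1 L2]]].
      destruct (Q_setI_exists d3 B (Hmeets d3 D3)) as [C3 H3].
      exists C3; split; [exists d3; split; assumption |].
      split; intros x; rewrite H3; intros [d3x Bx].
      + rewrite H1; split; [exact (L1 x d3x) | exact Bx].
      + rewrite H2; split; [exact (L2 x d3x) | exact Bx]. }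
  destruct (Q_sup_exists HX HWF E HE) as [M HM].
  assert (HMsB : Qset M = fun x => Qset s x /\ Qset B x).
  { assert (HEx : forall d x, D d -> Qset M x -> Qset d x /\ Qset B x).
    { intros d x Dd Mx; destruct (Q_setI_exists d B (Hmeets d Dd)) as [C HC].
      rewrite HM in Mx; pose proof (Mx C (ex_intro _ d (conj Dd HC))) as Cx.
      rewrite HC in Cx; exact Cx. }
    rewrite (Q_sup_Qcap HX HWF D s HD Hs); apply pred_ext; intro x; split.
    - intros Mx; destruct HD as [[d0 D0] _].
      split; [intros d Dd; exact (proj1 (HEx d x Dd Mx)) | exact (proj2 (HEx d0 x D0 Mx))].
    - intros [sx Bx]; rewrite HM; intros C [d [Dd HC]]; rewrite HC; split; [exact (sx d Dd) | exact Bx]. }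
  destruct (proj2 HV E M HE (is_sup_Qcap E M HM) (HsB M HMsB)) as [C [[d [Dd HC]] VC]].
  exists d; split; [exact Dd |].
  intros C' HC'; apply (proj1 HV C C' VC); intros x; rewrite HC', HC; trivial.
Qed.

Lemma meet_in_scott_open (V : Qpt X -> Prop) (A : Qpt X) :
  scott_open Qle V -> scott_open Qle (meet_in V A).
Proof.
  intros HV; split.
  - intros B B' HB HBB'; apply (meet_in_antitone V A B A B' HV); [| exact HB].
    intros x [Ax B'x]; split; [exact Ax | exact (HBB' x B'x)].
  - intros D s HD Hs HAs.
    destruct (meet_in_directed_sup D s A V HD Hs HV (meet_in_sym V A s HAs)) as [d [Dd Hd]].
    exists d; split; [exact Dd | exact (meet_in_sym V d A Hd)].
Qed.

Definition meet_in_all (V : Qpt X -> Prop) (K : Qpt X -> Prop) (A : Qpt X) : Prop :=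
  forall B, K B -> meet_in V A B.

Lemma meet_in_all_scott_open (V K : Qpt X -> Prop) :
  scott_open Qle V -> compact (QS X) K -> scott_open Qle (meet_in_all V K).
Proof.
  intros HV HK; split.
  - intros A A' HA HAA' B KB; apply (meet_in_antitone V A B A' B HV); [| exact (HA B KB)].
    intros x [A'x Bx]; split; [exact (HAA' x A'x) | exact Bx].
  - intros D s HD Hs HsK.
    destruct (@compact_directed_cover (QS X) K (fun O => exists d, D d /\ O = meet_in V d) HK)
      as [O [[d [Dd ->]] HKd]].
    + intros O [d [_ ->]]; exact (meet_in_scott_open V d HV).
    + destruct HD as [[d0 D0] Hdir]; split; [exists (meet_in V d0), d0; split; auto |].
      intros O1 O2 [d1 [D1 ->]] [d2 [D2 ->]].
      destruct (Hdir d1 d2 D1 D2) as [d3 [D3 [L1 L2]]].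
      exists (meet_in V d3); split; [exists d3; split; auto |].
      split; intros B; apply (meet_in_antitone V _ B d3 B HV); intros x [d3x Bx].
      * split; [exact (L1 x d3x) | exact Bx].
      * split; [exact (L2 x d3x) | exact Bx].
    + intros B KB; destruct (meet_in_directed_sup D s B V HD Hs HV (HsK B KB)) as [d [Dd Hd]].
      exists (meet_in V d); split; [exists d; split; auto | exact Hd].
    + exists d; split; [exact Dd | exact HKd].
Qed.

Section DirectedCover.
Variables K1 K2 : Qpt X -> Prop.
Hypothesis HK2 : compact (QS X) K2.
Hypotheses (SK1 : saturated (QS X) K1) (SK2 : saturated (QS X) K2).
Variable F : (Qpt X -> Prop) -> Prop.
Hypothesis HF : forall V, F V -> scott_open Qle V.
Hypothesis HFdir : directed (@subset (QS X)) F.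
Hypothesis Hcov : subset (fun A => K1 A /\ K2 A) (bigcup F).

Lemma directed_cover_meet_in_all (A : Qpt X) : K1 A -> exists V, F V /\ meet_in_all V K2 A.
Proof.
  intros K1A; destruct HFdir as [[V0 F0] Hdir].
  destruct (@compact_directed_cover (QS X) K2 (fun O => exists V, F V /\ O = meet_in V A) HK2)
    as [O [[V [FV ->]] HK2V]].
  - intros O [V [FV ->]]; exact (meet_in_scott_open V A (HF V FV)).
  - split; [exists (meet_in V0 A), V0; split; auto |].
    intros O1 O2 [V1 [F1 ->]] [V2 [F2 ->]]; destruct (Hdir V1 V2 F1 F2) as [V3 [F3 [S1 S2]]].
    exists (meet_in V3 A); split; [exists V3; split; auto |].
    split; intros B H C HC; [apply S1 | apply S2]; exact (H C HC).
  - intros B K2B; destruct (classic (exists x, Qset A x /\ Qset B x)) as [Hne | Hdisj].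
    + destruct (Q_setI_exists A B Hne) as [C HC].
      assert (HC12 : K1 C /\ K2 C).
      { split; [apply (saturated_QS_upper X K1 A C SK1 K1A) | apply (saturated_QS_upper X K2 B C SK2 K2B)];
          intros x; rewrite HC; intros [Ax Bx]; assumption. }
      destruct (Hcov C HC12) as [V [FV VC]].
      exists (meet_in V A); split; [exists V; split; auto |].
      intros C' HC'; apply (proj1 (HF V FV) C C' VC); intros x; rewrite HC', HC; trivial.
    + exists (meet_in V0 A); split; [exists V0; split; auto |].
      intros C HC; destruct (Qne C) as [x Cx]; rewrite HC in Cx.
      contradiction (Hdisj (ex_intro _ x Cx)).
  - exists V; split; [exact FV | exact HK2V].
Qed.

End DirectedCover.

Lemma QS_coherent : coherent (QS X).
Proof.
  intros K1 K2 [HK1 SK1] [HK2 SK2].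
  apply (compact_of_directed_covers (scott_topological X)); intros F HF HFdir Hcov.
  destruct (@compact_directed_cover (QS X) K1 (fun O => exists V, F V /\ O = meet_in_all V K2) HK1)
    as [O [[V [FV ->]] HK1V]].
  - intros O [V [FV ->]]; exact (meet_in_all_scott_open V K2 (HF V FV) HK2).
  - destruct HFdir as [[V0 F0] Hdir]; split; [exists (meet_in_all V0 K2), V0; split; auto |].
    intros O1 O2 [V1 [F1 ->]] [V2 [F2 ->]]; destruct (Hdir V1 V2 F1 F2) as [V3 [F3 [S1 S2]]].
    exists (meet_in_all V3 K2); split; [exists V3; split; auto |].
    split; intros A H B KB C HC; [apply S1 | apply S2]; exact (H B KB C HC).
  - intros A K1A; destruct (directed_cover_meet_in_all K1 K2 HK2 SK1 SK2 F HF HFdir Hcov A K1A)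
      as [V [FV HV]].
    exists (meet_in_all V K2); split; [exists V; split; auto | exact HV].
  - exists V; split; [exact FV |]; intros A [K1A K2A].
    apply (HK1V A K1A A K2A A); apply pred_ext; intro; tauto.
Qed.

End QS_coherent.

Lemma Q_good_of_well_filtered_coherent (X : tspace) :
  topological X -> well_filtered X -> coherent X -> Q_good X.
Proof.
  intros HX HWF Hcoh.
  exact (conj (Q_dcpo HX HWF) (conj (Q_inf_semilattice HX) (conj (Q_meet_continuous HX HWF)
           (conj (QS_well_filtered X HX HWF) (QS_coherent HX HWF Hcoh))))).
Qed.

Lemma QnR_well_filtered_coherent (n : nat) :
  topological (QnR n) /\ well_filtered (QnR n) /\ coherent (QnR n).
Proof.
  induction n as [| n [HX [HWF Hcoh]]].
  - pose proof sorgenfrey_topological as HX.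
    exact (conj HX (conj (well_filtered_of_compacts_closed HX sorgenfrey_compacts_closed)
                         (coherent_of_compacts_closed HX sorgenfrey_compacts_closed))).
  - exact (conj (scott_topological _) (conj (QS_well_filtered _ HX HWF) (QS_coherent HX HWF Hcoh))).
Qed.

Theorem proposition4p24 :
  (forall X : tspace, topological X -> well_filtered X -> coherent X -> Q_good X) /\
  (forall n : nat, Q_good (QnR n)).
Proof.
  split; [exact Q_good_of_well_filtered_coherent |].
  intro n; destruct (QnR_well_filtered_coherent n) as [HX [HWF Hcoh]].
  exact (Q_good_of_well_filtered_coherent _ HX HWF Hcoh).
Qed.
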